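(* Let $A\in\mathbb C^{m\times n}$, $m<n$, have full rank, let $0<p_0\le1$, and assume there exists $X\in\mathcal G(A)$ each of whose columns has at most $k_{p_0}(A)$ nonzero entries. Then for all $0<q<\infty$ and all $0\le p\le p_0$, $\mathrm{ginv}_{\mathrm{col}(p,q)}(A)=\{X\}$.
   Context: $\mathcal G(A)=\{X\in\mathbb C^{n\times m}:AX=I_m\}$, $\mathrm{ginv}_\nu(A)=\arg\min_{X\in\mathcal G(A)}\|X\|_\nu$. $\|x\|_0$ is the number of nonzero entries of $x$, and for $0<p<1$, $\|x\|_p=(\sum_i|x_i|^p)^{1/p}$. For $M$ with columns $m_j$, $\|M\|_{\mathrm{col}(p,q)}=(\sum_j\|m_j\|_p^q)^{1/q}$. For $0\le p\le1$, $k_p(A)$ is the largest integer $k$ such that for every $x\in\mathbb C^n$ with $\|x\|_0\le k$, $x$ is the unique minimizer of $\|\hat x\|_p$ subject to $A\hat x=Ax$. *)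

From Stdlib Require Import Reals.
Open Scope R_scope.

Record Cplx := mkC { Re : R ; Im : R }.
Definition C0 : Cplx := mkC 0 0.
Definition C1 : Cplx := mkC 1 0.
Definition Cadd (z w : Cplx) : Cplx := mkC (Re z + Re w) (Im z + Im w).
Definition Cmul (z w : Cplx) : Cplx :=
  mkC (Re z * Re w - Im z * Im w) (Re z * Im w + Im z * Re w).
Definition Cmod (z : Cplx) : R := sqrt (Re z * Re z + Im z * Im z).

Definition Ceq_dec (z w : Cplx) : {z = w} + {z <> w}.
Proof.
  destruct z as [a b], w as [c d].
  destruct (Req_EM_T a c) as [H1|H1]; destruct (Req_EM_T b d) as [H2|H2].
  - left; subst; reflexivity.
  - right; intros H; inversion H; contradiction.
  - right; intros H; inversion H; contradiction.
  - right; intros H; inversion H; contradiction.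
Defined.

Fixpoint Csum (f : nat -> Cplx) (n : nat) : Cplx :=
  match n with O => C0 | S k => Cadd (Csum f k) (f k) end.
Fixpoint Rsum (f : nat -> R) (n : nat) : R :=
  match n with O => 0 | S k => Rsum f k + f k end.

(* real power with the convention 0^a = 0 (used only for a > 0) *)
Definition rpow (x a : R) : R := if Rlt_dec 0 x then Rpower x a else 0.

(* ---------- vectors and matrices ----------
   A vector of Cplx^n is a function nat -> Cplx of which only the entries i < n matter;
   an m x n matrix is a function nat -> nat -> Cplx of which only entries i<m, j<n matter. *)
Definition vec_eq (n : nat) (x y : nat -> Cplx) : Prop := forall i, (i < n)%nat -> x i = y i.
Definition mat_eq (m n : nat) (X Y : nat -> nat -> Cplx) : Prop :=
  forall i j, (i < m)%nat -> (j < n)%nat -> X i j = Y i j.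

Definition mulmv (n : nat) (A : nat -> nat -> Cplx) (x : nat -> Cplx) : nat -> Cplx :=
  fun i => Csum (fun k => Cmul (A i k) (x k)) n.
Definition mulmm (n : nat) (A X : nat -> nat -> Cplx) : nat -> nat -> Cplx :=
  fun i j => Csum (fun k => Cmul (A i k) (X k j)) n.
Definition col (M : nat -> nat -> Cplx) (j : nat) : nat -> Cplx := fun i => M i j.

Definition full_row_rank (m n : nat) (A : nat -> nat -> Cplx) : Prop :=
  forall y : nat -> Cplx,
    (forall k, (k < n)%nat -> Csum (fun i => Cmul (y i) (A i k)) m = C0) ->
    forall i, (i < m)%nat -> y i = C0.

Definition in_G (m n : nat) (A X : nat -> nat -> Cplx) : Prop :=
  forall i j, (i < m)%nat -> (j < m)%nat ->
    mulmm n A X i j = (if Nat.eq_dec i j then C1 else C0).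

Fixpoint nnz (n : nat) (x : nat -> Cplx) : nat :=
  match n with
  | O => O
  | S k => (nnz k x + (if Ceq_dec (x k) C0 then 0 else 1))%nat
  end.

Definition pnorm (n : nat) (p : R) (x : nat -> Cplx) : R :=
  if Req_EM_T p 0 then INR (nnz n x)
  else rpow (Rsum (fun i => rpow (Cmod (x i)) p) n) (/ p).

Definition colnorm (n m : nat) (p q : R) (M : nat -> nat -> Cplx) : R :=
  rpow (Rsum (fun j => rpow (pnorm n p (col M j)) q) m) (/ q).

Definition in_ginv_col (m n : nat) (p q : R) (A X : nat -> nat -> Cplx) : Prop :=
  in_G m n A X /\
  forall Y, in_G m n A Y -> colnorm n m p q X <= colnorm n m p q Y.

Definition unique_lp_minimizer (m n : nat) (p : R) (A : nat -> nat -> Cplx) (x : nat -> Cplx) : Prop :=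
  let feas := fun xh => vec_eq m (mulmv n A xh) (mulmv n A x) in
  (forall xh, feas xh -> pnorm n p x <= pnorm n p xh) /\
  (forall y, feas y -> (forall xh, feas xh -> pnorm n p y <= pnorm n p xh) -> vec_eq n y x).

Definition kp_prop (m n : nat) (p : R) (A : nat -> nat -> Cplx) (k : nat) : Prop :=
  forall x : nat -> Cplx, (nnz n x <= k)%nat -> unique_lp_minimizer m n p A x.

Definition is_kp (m n : nat) (p : R) (A : nat -> nat -> Cplx) (k : nat) : Prop :=
  kp_prop m n p A k /\ forall k', kp_prop m n p A k' -> (k' <= k)%nat.

(* Since k = k_p0(A), every nonzero v in ker A has the null space property of order k at
   exponent p0: on any k indices its p0-mass is smaller than on the remaining ones, because the
   part of v on those indices and minus the rest have the same image under A. The property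
   descends to every 0 < p <= p0: it suffices to check it on a set of largest entries, and
   rescaling by t^(p-p0), t the smallest entry of that set, weighs the set down and the rest up.
   With the p-triangle inequality it makes every k-sparse x the unique l_p-minimal solution of
   A y = A x (for p = 0 this is immediate from the definition of k_p0). Each column of X is
   such a solution of A x = e_j, so X is the unique minimizer of the column norm. *)

From Stdlib Require Import Reals Lra Lia List Classical.
From Coquelicot Require Complex.
Open Scope R_scope.

Lemma rpow_0 a : rpow 0 a = 0.
Proof. unfold rpow; destruct (Rlt_dec 0 0); [lra | reflexivity]. Qed.

Lemma rpow_pos x a : 0 < x -> rpow x a = Rpower x a.
Proof. intros Hx; unfold rpow; destruct (Rlt_dec 0 x); [reflexivity | lra]. Qed.

Lemma rpow_gt0 x a : 0 < x -> 0 < rpow x a.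
Proof. intros Hx; rewrite rpow_pos by exact Hx; apply exp_pos. Qed.

Lemma rpow_ge0 x a : 0 <= rpow x a.
Proof.
  destruct (Rlt_dec 0 x) as [Hx | Hx].
  - left; apply rpow_gt0, Hx.
  - unfold rpow; destruct (Rlt_dec 0 x); [contradiction | lra].
Qed.

Lemma rpow_lt x y a : 0 < a -> 0 <= x < y -> rpow x a < rpow y a.
Proof.
  intros Ha [[Hx | <-] Hxy].
  - rewrite !rpow_pos by lra; apply Rlt_Rpower_l; lra.
  - rewrite rpow_0; apply rpow_gt0, Hxy.
Qed.

Lemma rpow_le x y a : 0 < a -> 0 <= x <= y -> rpow x a <= rpow y a.
Proof. intros Ha [Hx [Hxy | <-]]; [left; apply rpow_lt | right]; auto. Qed.

Lemma rpow_lt_iff x y a : 0 < a -> 0 <= x -> 0 <= y -> rpow x a < rpow y a <-> x < y.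
Proof.
  intros Ha Hx Hy; split; [| intros; apply rpow_lt; auto].
  intros H; apply Rnot_le_lt; intros Hyx.
  assert (rpow y a <= rpow x a) by (apply rpow_le; auto); lra.
Qed.

Lemma rpow_antitone x y e : e <= 0 -> 0 < x <= y -> rpow y e <= rpow x e.
Proof.
  intros He Hxy; rewrite !rpow_pos by lra.
  rewrite <- (Ropp_involutive e), (Rpower_Ropp x), (Rpower_Ropp y).
  apply Rinv_le_contravar; [apply exp_pos | apply Rle_Rpower_l; lra].
Qed.

Lemma rpow_split b p p0 : rpow b p = rpow b (p - p0) * rpow b p0.
Proof.
  destruct (Rlt_dec 0 b) as [Hb | Hb].
  - rewrite !rpow_pos by exact Hb; rewrite <- Rpower_plus; f_equal; ring.
  - unfold rpow; destruct (Rlt_dec 0 b); [contradiction | ring].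
Qed.

(* [s^p = s * s^(p-1) >= s * (s+t)^(p-1)], and likewise for [t]. *)
Lemma rpow_subadditive s t p : 0 < p <= 1 -> 0 <= s -> 0 <= t ->
  rpow (s + t) p <= rpow s p + rpow t p.
Proof.
  intros Hp [Hs | <-] [Ht | <-]; rewrite ?Rplus_0_l, ?Rplus_0_r, ?rpow_0; try lra.
  rewrite !(rpow_split _ p 1), !(rpow_pos _ 1), !Rpower_1 by lra.
  assert (rpow (s + t) (p - 1) <= rpow s (p - 1)) by (apply rpow_antitone; lra).
  assert (rpow (s + t) (p - 1) <= rpow t (p - 1)) by (apply rpow_antitone; lra).
  nra.
Qed.

Lemma Rsum_ext f g n : (forall i, (i < n)%nat -> f i = g i) -> Rsum f n = Rsum g n.
Proof.
  induction n as [|n IH]; intros H; simpl; [reflexivity|].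
  rewrite IH by (intros; apply H; lia); rewrite H by lia; reflexivity.
Qed.

Lemma Rsum_le f g n : (forall i, (i < n)%nat -> f i <= g i) -> Rsum f n <= Rsum g n.
Proof.
  induction n as [|n IH]; intros H; simpl; [lra|].
  specialize (IH ltac:(intros; apply H; lia)); specialize (H n ltac:(lia)); lra.
Qed.

Lemma Rsum_lt f g n i0 : (i0 < n)%nat -> (forall i, (i < n)%nat -> f i <= g i) ->
  f i0 < g i0 -> Rsum f n < Rsum g n.
Proof.
  induction n as [|n IH]; intros Hi0 H Hlt; simpl; [lia|].
  assert (Hn := H n ltac:(lia)).
  destruct (Nat.eq_dec i0 n) as [-> | Hne].
  - assert (Rsum f n <= Rsum g n) by (apply Rsum_le; intros; apply H; lia); lra.
  - assert (Rsum f n < Rsum g n) by (apply IH; [lia | intros; apply H; lia | exact Hlt]); lra.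
Qed.

Lemma Rsum_plus f g n : Rsum (fun i => f i + g i) n = Rsum f n + Rsum g n.
Proof. induction n as [|n IH]; simpl; [ring | rewrite IH; ring]. Qed.

Lemma Rsum_mult_l c f n : Rsum (fun i => c * f i) n = c * Rsum f n.
Proof. induction n as [|n IH]; simpl; [ring | rewrite IH; ring]. Qed.

Lemma Rsum_const0 n : Rsum (fun _ => 0) n = 0.
Proof. induction n as [|n IH]; simpl; [reflexivity | rewrite IH; ring]. Qed.

Lemma Rsum_eq0 f n : (forall i, (i < n)%nat -> f i = 0) -> Rsum f n = 0.
Proof. intros H; rewrite (Rsum_ext f (fun _ => 0)) by exact H; apply Rsum_const0. Qed.

Lemma Rsum_ge0 f n : (forall i, (i < n)%nat -> 0 <= f i) -> 0 <= Rsum f n.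
Proof. intros H; rewrite <- (Rsum_const0 n); apply Rsum_le, H. Qed.

Lemma Rsum_dirac c j n : (j < n)%nat -> Rsum (fun l => if Nat.eqb l j then c else 0) n = c.
Proof.
  induction n as [|n IH]; intros Hj; simpl; [lia|].
  destruct (Nat.eqb_spec n j) as [-> | Hne].
  - rewrite Rsum_eq0; [ring|]. intros l Hl; destruct (Nat.eqb_spec l j); [lia | reflexivity].
  - rewrite IH by lia; ring.
Qed.

Definition Rsum_in (n : nat) (S : nat -> bool) (f : nat -> R) : R :=
  Rsum (fun i => if S i then f i else 0) n.
Definition Rsum_out (n : nat) (S : nat -> bool) (f : nat -> R) : R :=
  Rsum (fun i => if S i then 0 else f i) n.
Definition card (n : nat) (S : nat -> bool) : R := Rsum_in n S (fun _ => 1).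

Lemma Rsum_in_out n S f : Rsum_in n S f + Rsum_out n S f = Rsum f n.
Proof.
  unfold Rsum_in, Rsum_out; rewrite <- Rsum_plus.
  apply Rsum_ext; intros i _; destruct (S i); ring.
Qed.

Lemma Rsum_in_ext n S T f : (forall i, (i < n)%nat -> S i = T i) ->
  Rsum_in n S f = Rsum_in n T f.
Proof. intros H; apply Rsum_ext; intros i Hi; rewrite H by exact Hi; reflexivity. Qed.

Lemma Rsum_out_ext n S T f : (forall i, (i < n)%nat -> S i = T i) ->
  Rsum_out n S f = Rsum_out n T f.
Proof. intros H; apply Rsum_ext; intros i Hi; rewrite H by exact Hi; reflexivity. Qed.

Definition swap (S : nat -> bool) (i j : nat) : nat -> bool :=
  fun l => if Nat.eqb l i then false else if Nat.eqb l j then true else S l.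

Section Swap.
Variables (n : nat) (S : nat -> bool) (i j : nat).
Hypotheses (Hi : (i < n)%nat) (Hj : (j < n)%nat) (Si : S i = true) (Sj : S j = false).

Lemma Rsum_in_swap f : Rsum_in n (swap S i j) f = Rsum_in n S f - f i + f j.
Proof.
  assert (Hij : i <> j) by congruence.
  transitivity (Rsum_in n S f + Rsum (fun l => if Nat.eqb l i then - f i else 0) n
                + Rsum (fun l => if Nat.eqb l j then f j else 0) n).
  2: rewrite !Rsum_dirac by assumption; ring.
  unfold Rsum_in; rewrite <- !Rsum_plus.
  apply Rsum_ext; intros l _; unfold swap.
  destruct (Nat.eqb_spec l i), (Nat.eqb_spec l j); subst; rewrite ?Si, ?Sj; try lia; ring.
Qed.

Lemma Rsum_out_swap f : Rsum_out n (swap S i j) f = Rsum_out n S f + f i - f j.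
Proof.
  pose proof (Rsum_in_out n S f); pose proof (Rsum_in_out n (swap S i j) f).
  rewrite Rsum_in_swap in *; lra.
Qed.

Lemma card_swap : card n (swap S i j) = card n S.
Proof. unfold card; rewrite Rsum_in_swap; ring. Qed.

End Swap.

Definition upd (T : nat -> bool) (j : nat) (b : bool) : nat -> bool :=
  fun i => if Nat.eqb i j then b else T i.

Fixpoint subsets (n : nat) : list (nat -> bool) :=
  match n with
  | O => (fun _ => false) :: nil
  | S n' => flat_map (fun T => upd T n' false :: upd T n' true :: nil) (subsets n')
  end.

Lemma subsets_complete n (T : nat -> bool) :
  exists T', In T' (subsets n) /\ forall i, (i < n)%nat -> T' i = T i.
Proof.
  induction n as [|n [T' [HT' ET']]].
  - exists (fun _ => false); split; [left; reflexivity | intros; lia].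
  - exists (upd T' n (T n)); split.
    + apply in_flat_map; exists T'; split; [exact HT'|].
      destruct (T n); simpl; auto.
    + intros i Hi; unfold upd; destruct (Nat.eqb_spec i n) as [-> | Hne]; [reflexivity|].
      apply ET'; lia.
Qed.

Lemma list_argmax {A : Type} (l : list A) (P : A -> Prop) (f : A -> R) :
  (exists a, In a l /\ P a) ->
  exists a, In a l /\ P a /\ forall b, In b l -> P b -> f b <= f a.
Proof.
  induction l as [|a l IH]; intros [x [Hx Px]]; [destruct Hx|].
  destruct (classic (exists b, In b l /\ P b)) as [Hl | Hl].
  - destruct (IH Hl) as [c [Hc [Pc Hmax]]].
    destruct (classic (P a /\ f c < f a)) as [[Pa Hlt] | Hnot].
    + exists a; repeat split; [left; reflexivity | exact Pa |].
      intros b [<- | Hb] Pb; [lra | specialize (Hmax b Hb Pb); lra].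
    + exists c; repeat split; [right; exact Hc | exact Pc |].
      intros b [<- | Hb] Pb; [apply Rnot_lt_le; intro; apply Hnot; auto | auto].
  - destruct Hx as [<- | Hx]; [| exfalso; eauto].
    exists a; repeat split; [left; reflexivity | exact Px |].
    intros b [<- | Hb] Pb; [lra | exfalso; eauto].
Qed.

Lemma exists_max_subset n (P : (nat -> bool) -> Prop) (F : (nat -> bool) -> R) :
  (forall S T, (forall i, (i < n)%nat -> S i = T i) -> (P S -> P T) /\ F S = F T) ->
  (exists S, P S) -> exists M, P M /\ forall T, P T -> F T <= F M.
Proof.
  intros Hinv [S HS].
  destruct (subsets_complete n S) as [S' [HS' ES']].
  destruct (list_argmax (subsets n) P F) as [M [_ [PM Hmax]]].
  { exists S'; split; [exact HS'|]. apply (Hinv S S'); [intros; symmetry; auto | exact HS]. }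
  exists M; split; [exact PM|]; intros T PT.
  destruct (subsets_complete n T) as [T' [HT' ET']].
  destruct (Hinv T T') as [HPT' ->]; [intros; symmetry; auto|].
  apply Hmax; auto.
Qed.

Lemma exists_argmin_below n (P : nat -> Prop) (f : nat -> R) :
  (exists i, (i < n)%nat /\ P i) ->
  exists i, (i < n)%nat /\ P i /\ forall j, (j < n)%nat -> P j -> f i <= f j.
Proof.
  intros [i [Hi Pi]].
  destruct (list_argmax (seq 0 n) P (fun j => - f j)) as [i0 [Hi0 [Pi0 Hmin]]].
  { exists i; rewrite in_seq; split; [lia | exact Pi]. }
  rewrite in_seq in Hi0; exists i0; repeat split; [lia | exact Pi0 |].
  intros j Hj Pj; specialize (Hmin j ltac:(rewrite in_seq; lia) Pj); lra.
Qed.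

Definition nsp (n k : nat) (p : R) (a : nat -> R) : Prop :=
  forall S, card n S <= INR k ->
    Rsum_in n S (fun i => rpow (a i) p) < Rsum_out n S (fun i => rpow (a i) p).

Lemma mass_lt_rescale n M (a : nat -> R) p p0 t : 0 < t -> p <= p0 ->
  (forall i, (i < n)%nat -> M i = true -> t <= a i) ->
  (forall i, (i < n)%nat -> M i = false -> 0 <= a i <= t) ->
  Rsum_in n M (fun i => rpow (a i) p0) < Rsum_out n M (fun i => rpow (a i) p0) ->
  Rsum_in n M (fun i => rpow (a i) p) < Rsum_out n M (fun i => rpow (a i) p).
Proof.
  intros Ht Hp Hin Hout Hlt.
  set (c := rpow t (p - p0)).
  assert (Hc : 0 < c) by apply rpow_gt0, Ht.
  assert (Rsum_in n M (fun i => rpow (a i) p) <= c * Rsum_in n M (fun i => rpow (a i) p0)).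
  { unfold Rsum_in; rewrite <- Rsum_mult_l; apply Rsum_le; intros i Hi.
    destruct (M i) eqn:Mi; [|lra].
    rewrite (rpow_split _ p p0); apply Rmult_le_compat_r; [apply rpow_ge0|].
    apply rpow_antitone; [lra | split; [exact Ht | apply Hin; auto]]. }
  assert (c * Rsum_out n M (fun i => rpow (a i) p0) <= Rsum_out n M (fun i => rpow (a i) p)).
  { unfold Rsum_out; rewrite <- Rsum_mult_l; apply Rsum_le; intros i Hi.
    destruct (M i) eqn:Mi; [lra|].
    destruct (Hout i Hi Mi) as [[Hai | <-] Hat].
    - rewrite (rpow_split _ p p0); apply Rmult_le_compat_r; [apply rpow_ge0|].
      apply rpow_antitone; lra.
    - rewrite !rpow_0; lra. }
  assert (c * Rsum_in n M (fun i => rpow (a i) p0) < c * Rsum_out n M (fun i => rpow (a i) p0))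
    by (apply Rmult_lt_compat_l; assumption).
  lra.
Qed.

Lemma top_mass_lt n M (a : nat -> R) p p0 : p <= p0 -> (forall i, 0 <= a i) ->
  (exists i, (i < n)%nat /\ M i = true) ->
  (forall i j, (i < n)%nat -> (j < n)%nat -> M i = true -> M j = false -> a j <= a i) ->
  Rsum_in n M (fun i => rpow (a i) p0) < Rsum_out n M (fun i => rpow (a i) p0) ->
  Rsum_in n M (fun i => rpow (a i) p) < Rsum_out n M (fun i => rpow (a i) p).
Proof.
  intros Hp Ha HM Hdom Hlt.
  destruct (exists_argmin_below n (fun i => M i = true) a HM) as [i0 [Hi0 [Mi0 Hmin]]].
  destruct (Ha i0) as [Ht | Ht].
  - apply (mass_lt_rescale n M a p p0 (a i0)); auto.
  - exfalso.
    assert (Rsum_out n M (fun i => rpow (a i) p0) = 0).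
    { apply Rsum_eq0; intros i Hi; destruct (M i) eqn:Mi; [reflexivity|].
      assert (Hai : a i = 0) by (specialize (Hdom i0 i Hi0 Hi Mi0 Mi); specialize (Ha i); lra).
      rewrite Hai, rpow_0; reflexivity. }
    assert (0 <= Rsum_in n M (fun i => rpow (a i) p0))
      by (apply Rsum_ge0; intros i _; destruct (M i); [apply rpow_ge0 | lra]).
    lra.
Qed.

Lemma max_mass_set_dominates n k (g : nat -> R) M : card n M <= INR k ->
  (forall T, card n T <= INR k ->
     Rsum_in n T g - Rsum_out n T g <= Rsum_in n M g - Rsum_out n M g) ->
  forall i j, (i < n)%nat -> (j < n)%nat -> M i = true -> M j = false -> g j <= g i.
Proof.
  intros HM Hmax i j Hi Hj Mi Mj.
  assert (Hswap := Hmax (swap M i j) ltac:(rewrite card_swap; assumption)).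
  rewrite Rsum_in_swap, Rsum_out_swap in Hswap by assumption; lra.
Qed.

(* Only sets of largest entries need checking, and for those [mass_lt_rescale] applies. *)
Lemma nsp_antitone n k (a : nat -> R) p p0 : 0 < p <= p0 -> (forall i, 0 <= a i) ->
  (exists i, (i < n)%nat /\ 0 < a i) -> nsp n k p0 a -> nsp n k p a.
Proof.
  intros Hp Ha [i1 [Hi1 Hai1]] Hnsp S HS.
  set (g := fun i => rpow (a i) p).
  destruct (exists_max_subset n (fun T => card n T <= INR k)
              (fun T => Rsum_in n T g - Rsum_out n T g)) as [M [HM Hmax]].
  { intros T T' E; unfold card.
    rewrite !(Rsum_in_ext n T T'), (Rsum_out_ext n T T') by exact E; auto. }
  { exists S; exact HS. }
  assert (Hle := Hmax S HS).
  enough (Rsum_in n M g < Rsum_out n M g) by lra.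
  destruct (classic (exists i, (i < n)%nat /\ M i = true)) as [Hne | Hempty].
  - apply top_mass_lt with p0; [lra | exact Ha | exact Hne | | apply Hnsp, HM].
    intros i j Hi Hj Mi Mj; apply Rnot_lt_le; intros Hlt.
    assert (g i < g j) by (apply rpow_lt; [lra | split; [apply Ha | exact Hlt]]).
    assert (g j <= g i) by (apply (max_mass_set_dominates n k g M); assumption).
    lra.
  - assert (Rsum_in n M g = 0).
    { apply Rsum_eq0; intros i Hi; destruct (M i) eqn:Mi; [exfalso; eauto | reflexivity]. }
    assert (0 < Rsum_out n M g).
    { apply Rle_lt_trans with (Rsum (fun _ => 0) n); [rewrite Rsum_const0; lra|].
      apply Rsum_lt with i1; [exact Hi1 | |].
      - intros i _; destruct (M i); [lra | apply rpow_ge0].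
      - destruct (M i1) eqn:Mi1; [exfalso; eauto | apply rpow_gt0, Hai1]. }
    lra.
Qed.

Definition Csub (z w : Cplx) : Cplx := mkC (Re z - Re w) (Im z - Im w).

Lemma Cplx_eq z w : Re z = Re w -> Im z = Im w -> z = w.
Proof. destruct z, w; simpl; intros -> ->; reflexivity. Qed.

Lemma Csub_diag z : Csub z z = C0.
Proof. apply Cplx_eq; simpl; ring. Qed.

Lemma Csub_0r z : Csub z C0 = z.
Proof. apply Cplx_eq; simpl; ring. Qed.

Lemma Csub_eq0 z w : Csub z w = C0 -> z = w.
Proof. intros H; apply Cplx_eq; [apply (f_equal Re) in H | apply (f_equal Im) in H];
  simpl in H; lra. Qed.

Lemma Csub_eq_l z w : Csub z w = z -> w = C0.
Proof. intros H; apply Cplx_eq; [apply (f_equal Re) in H | apply (f_equal Im) in H];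
  simpl in *; lra. Qed.

Lemma Cmul_sub_r a z w : Cmul a (Csub z w) = Csub (Cmul a z) (Cmul a w).
Proof. apply Cplx_eq; simpl; ring. Qed.

Lemma Csum_ext f g n : (forall k, (k < n)%nat -> f k = g k) -> Csum f n = Csum g n.
Proof.
  induction n as [|n IH]; intros H; simpl; [reflexivity|].
  rewrite IH by (intros; apply H; lia); rewrite H by lia; reflexivity.
Qed.

Lemma Csum_sub f g n : Csum (fun k => Csub (f k) (g k)) n = Csub (Csum f n) (Csum g n).
Proof.
  induction n as [|n IH]; simpl; [apply Cplx_eq; simpl; ring|].
  rewrite IH; apply Cplx_eq; simpl; ring.
Qed.

Lemma mulmv_sub n A x y i :
  mulmv n A (fun l => Csub (x l) (y l)) i = Csub (mulmv n A x i) (mulmv n A y i).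
Proof.
  unfold mulmv; rewrite <- Csum_sub.
  induction n as [|n IH]; simpl; [reflexivity | rewrite IH, Cmul_sub_r; reflexivity].
Qed.

Lemma Cmod_C0 : Cmod C0 = 0.
Proof. unfold Cmod; simpl; rewrite Rmult_0_l, Rplus_0_l; apply sqrt_0. Qed.

Lemma Cmod_ge0 z : 0 <= Cmod z.
Proof. apply sqrt_pos. Qed.

Lemma Cmod_gt0 z : z <> C0 -> 0 < Cmod z.
Proof.
  intros Hz; apply sqrt_lt_R0; destruct z as [a b]; simpl.
  destruct (Req_dec a 0), (Req_dec b 0); subst; [exfalso; apply Hz; reflexivity | nra ..].
Qed.

Lemma Cmod_sub_0l w : Cmod (Csub C0 w) = Cmod w.
Proof. unfold Cmod; simpl; f_equal; ring. Qed.

Lemma Cmod_sub_triangle z w : Cmod z <= Cmod w + Cmod (Csub z w).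
Proof.
  assert (Hmod : forall u, Cmod u = Complex.Cmod (Re u, Im u))
    by (intros u; unfold Cmod, Complex.Cmod; simpl; f_equal; ring).
  rewrite !Hmod.
  eapply Rle_trans; [| apply (Complex.Cmod_triangle (Re w, Im w) (Re (Csub z w), Im (Csub z w)))].
  unfold Complex.Cplus; simpl; right; f_equal; f_equal; ring.
Qed.

Definition support (x : nat -> Cplx) : nat -> bool :=
  fun i => if Ceq_dec (x i) C0 then false else true.

Lemma support_false x i : support x i = false -> x i = C0.
Proof. unfold support; destruct (Ceq_dec (x i) C0); [auto | discriminate]. Qed.

Lemma card_support n x : card n (support x) = INR (nnz n x).
Proof.
  induction n as [|n IH]; [reflexivity|].
  simpl nnz; rewrite plus_INR, <- IH.
  unfold card, Rsum_in, support; simpl; destruct (Ceq_dec (x n) C0); simpl; ring.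
Qed.

Lemma nnz_le_card n x S : (forall i, (i < n)%nat -> S i = false -> x i = C0) ->
  INR (nnz n x) <= card n S.
Proof.
  intros H; rewrite <- card_support; apply Rsum_le; intros i Hi; unfold support.
  destruct (S i) eqn:Si, (Ceq_dec (x i) C0) as [E | E]; try lra.
  exfalso; apply E, H; auto.
Qed.

Lemma nnz_ext n x y : vec_eq n x y -> nnz n x = nnz n y.
Proof.
  induction n as [|n IH]; intros H; simpl; [reflexivity|].
  rewrite IH by (intros i Hi; apply H; lia); rewrite H by lia; reflexivity.
Qed.

Lemma pnorm_pos n p x : p <> 0 ->
  pnorm n p x = rpow (Rsum (fun i => rpow (Cmod (x i)) p) n) (/ p).
Proof. intros Hp; unfold pnorm; destruct (Req_EM_T p 0); [contradiction | reflexivity]. Qed.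

Lemma pnorm_ge0 n p x : 0 <= pnorm n p x.
Proof. unfold pnorm; destruct (Req_EM_T p 0); [apply pos_INR | apply rpow_ge0]. Qed.

Lemma pnorm_ext n p x y : vec_eq n x y -> pnorm n p x = pnorm n p y.
Proof.
  intros H; unfold pnorm; destruct (Req_EM_T p 0).
  - rewrite (nnz_ext n x y H); reflexivity.
  - f_equal; apply Rsum_ext; intros i Hi; rewrite H by exact Hi; reflexivity.
Qed.

Lemma pnorm_lt_iff n p x y : 0 < p ->
  pnorm n p x < pnorm n p y <->
  Rsum (fun i => rpow (Cmod (x i)) p) n < Rsum (fun i => rpow (Cmod (y i)) p) n.
Proof.
  intros Hp; rewrite !pnorm_pos by lra.
  apply rpow_lt_iff; [apply Rinv_0_lt_compat, Hp | apply Rsum_ge0; intros; apply rpow_ge0 ..].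
Qed.

Lemma unique_minimizer_lt m n p A x y : unique_lp_minimizer m n p A x ->
  vec_eq m (mulmv n A y) (mulmv n A x) -> ~ vec_eq n y x -> pnorm n p x < pnorm n p y.
Proof.
  intros [Hmin Huniq] Hfeas Hne; apply Rnot_le_lt; intros Hyx.
  apply Hne, Huniq; [exact Hfeas|].
  intros xh Hxh; specialize (Hmin xh Hxh); lra.
Qed.

(* Split [v] in the kernel as [u - w] with [u] supported on [S]: then [A w = A u] and [u] is
   [k]-sparse, so [u] beats [w]. *)
Lemma kp_prop_nsp m n p0 A k v : 0 < p0 -> kp_prop m n p0 A k ->
  (forall i, (i < m)%nat -> mulmv n A v i = C0) -> (exists i, (i < n)%nat /\ v i <> C0) ->
  nsp n k p0 (fun i => Cmod (v i)).
Proof.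
  intros Hp0 Hkp Hker [i1 [Hi1 Hv1]] S HS.
  set (u := fun i => if S i then v i else C0).
  set (w := fun i => Csub (u i) (v i)).
  assert (Hu : (nnz n u <= k)%nat).
  { apply INR_le; eapply Rle_trans; [| exact HS]; apply nnz_le_card.
    intros i _ Si; unfold u; rewrite Si; reflexivity. }
  assert (Hfeas : vec_eq m (mulmv n A w) (mulmv n A u)).
  { intros i Hi; unfold w; rewrite mulmv_sub, (Hker i Hi), Csub_0r; reflexivity. }
  assert (Hne : ~ vec_eq n w u) by (intros E; apply Hv1, (Csub_eq_l (u i1)), E, Hi1).
  assert (Hlt := unique_minimizer_lt m n p0 A u w (Hkp u Hu) Hfeas Hne).
  apply pnorm_lt_iff in Hlt; [| exact Hp0].
  assert (Ein : Rsum (fun i => rpow (Cmod (u i)) p0) n = Rsum_in n S (fun i => rpow (Cmod (v i)) p0)).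
  { apply Rsum_ext; intros i _; unfold u; destruct (S i); [| rewrite Cmod_C0, rpow_0]; reflexivity. }
  assert (Eout : Rsum (fun i => rpow (Cmod (w i)) p0) n = Rsum_out n S (fun i => rpow (Cmod (v i)) p0)).
  { apply Rsum_ext; intros i _; unfold w, u; destruct (S i);
      [rewrite Csub_diag, Cmod_C0, rpow_0 | rewrite Cmod_sub_0l]; reflexivity. }
  rewrite <- Ein, <- Eout; exact Hlt.
Qed.

(* Off the support [T] of [x] the moduli of [x - y] and [y] agree; on [T], the p-triangle
   inequality bounds [x] by [y] and [x - y]. *)
Lemma nsp_pnorm_lt n k p x y : 0 < p <= 1 -> (nnz n x <= k)%nat ->
  nsp n k p (fun i => Cmod (Csub (x i) (y i))) -> pnorm n p x < pnorm n p y.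
Proof.
  intros Hp Hx Hnsp.
  set (T := support x).
  assert (Hlt := Hnsp T ltac:(unfold T; rewrite card_support; apply le_INR, Hx)).
  apply pnorm_lt_iff; [lra|].
  rewrite <- (Rsum_in_out n T (fun i => rpow (Cmod (x i)) p)),
          <- (Rsum_in_out n T (fun i => rpow (Cmod (y i)) p)).
  assert (Rsum_out n T (fun i => rpow (Cmod (x i)) p) = 0).
  { apply Rsum_eq0; intros i _; destruct (T i) eqn:Ti; [reflexivity|].
    rewrite (support_false x i Ti), Cmod_C0, rpow_0; reflexivity. }
  assert (Rsum_in n T (fun i => rpow (Cmod (x i)) p) <=
          Rsum_in n T (fun i => rpow (Cmod (y i)) p) +
          Rsum_in n T (fun i => rpow (Cmod (Csub (x i) (y i))) p)).
  { unfold Rsum_in; rewrite <- Rsum_plus; apply Rsum_le; intros i _; destruct (T i); [| lra].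
    eapply Rle_trans; [| apply rpow_subadditive; [lra | apply Cmod_ge0 ..]].
    apply rpow_le; [lra | split; [apply Cmod_ge0 | apply Cmod_sub_triangle]]. }
  assert (Rsum_out n T (fun i => rpow (Cmod (Csub (x i) (y i))) p) =
          Rsum_out n T (fun i => rpow (Cmod (y i)) p)).
  { apply Rsum_ext; intros i _; destruct (T i) eqn:Ti; [reflexivity|].
    rewrite (support_false x i Ti), Cmod_sub_0l; reflexivity. }
  lra.
Qed.

(* For [p = 0] only the definition of [k_p0] is needed: a sparser [y] would itself be a
   minimizer of the same problem. *)
Lemma sparse_nnz_lt m n p0 A k x y : kp_prop m n p0 A k -> (nnz n x <= k)%nat ->
  vec_eq m (mulmv n A y) (mulmv n A x) -> ~ vec_eq n y x -> (nnz n x < nnz n y)%nat.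
Proof.
  intros Hkp Hx Hfeas Hne; apply Nat.nle_gt; intros Hyx.
  destruct (Hkp y ltac:(lia)) as [Hymin _], (Hkp x Hx) as [Hxmin Hxuniq].
  apply Hne, Hxuniq; [exact Hfeas|].
  intros xh Hxh; assert (Hxy := Hymin x (fun i Hi => eq_sym (Hfeas i Hi))).
  specialize (Hxmin xh Hxh); lra.
Qed.

Lemma sparse_pnorm_lt m n p0 p A k x y : 0 < p0 <= 1 -> 0 <= p <= p0 ->
  kp_prop m n p0 A k -> (nnz n x <= k)%nat ->
  vec_eq m (mulmv n A y) (mulmv n A x) -> ~ vec_eq n y x -> pnorm n p x < pnorm n p y.
Proof.
  intros Hp0 Hp Hkp Hx Hfeas Hne.
  destruct (Req_dec p 0) as [-> | Hp_ne].
  - unfold pnorm; destruct (Req_EM_T 0 0) as [_ | []]; [| reflexivity].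
    apply lt_INR; eapply sparse_nnz_lt; eassumption.
  - set (v := fun i => Csub (x i) (y i)).
    assert (Hker : forall i, (i < m)%nat -> mulmv n A v i = C0)
      by (intros i Hi; unfold v; rewrite mulmv_sub, (Hfeas i Hi), Csub_diag; reflexivity).
    assert (Hv : exists i, (i < n)%nat /\ 0 < Cmod (v i)).
    { apply NNPP; intros Hall; apply Hne; intros i Hi; symmetry; apply Csub_eq0, NNPP.
      intros Hvi; apply Hall; exists i; split; [exact Hi | apply Cmod_gt0, Hvi]. }
    apply nsp_pnorm_lt with k; [lra | exact Hx |].
    apply nsp_antitone with p0; [lra | intros; apply Cmod_ge0 | exact Hv |].
    apply kp_prop_nsp with m A; [lra | exact Hkp | exact Hker |].
    destruct Hv as [i [Hi Hvi]]; exists i; split; [exact Hi|].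
    intros E; unfold v in Hvi; rewrite E, Cmod_C0 in Hvi; lra.
Qed.

Lemma in_G_col_feasible m n A X Z j : in_G m n A X -> in_G m n A Z -> (j < m)%nat ->
  vec_eq m (mulmv n A (col Z j)) (mulmv n A (col X j)).
Proof. intros HX HZ Hj i Hi; exact (eq_trans (HZ i j Hi Hj) (eq_sym (HX i j Hi Hj))). Qed.

Lemma in_G_ext m n A X Y : mat_eq n m Y X -> in_G m n A X -> in_G m n A Y.
Proof.
  intros E HX i j Hi Hj; rewrite <- (HX i j Hi Hj).
  apply Csum_ext; intros l Hl; rewrite E by assumption; reflexivity.
Qed.

Lemma colnorm_ext n m p q X Y : mat_eq n m Y X -> colnorm n m p q Y = colnorm n m p q X.
Proof.
  intros E; unfold colnorm; f_equal; apply Rsum_ext; intros j Hj; f_equal.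
  apply pnorm_ext; intros i Hi; apply E; assumption.
Qed.

Lemma colnorm_le n m p q X Y : 0 < q ->
  (forall j, (j < m)%nat -> pnorm n p (col X j) <= pnorm n p (col Y j)) ->
  colnorm n m p q X <= colnorm n m p q Y.
Proof.
  intros Hq Hle; apply rpow_le; [apply Rinv_0_lt_compat, Hq|].
  split; [apply Rsum_ge0; intros; apply rpow_ge0|].
  apply Rsum_le; intros j Hj; apply rpow_le; [exact Hq | split; [apply pnorm_ge0 | auto]].
Qed.

Lemma colnorm_lt n m p q X Y j0 : 0 < q -> (j0 < m)%nat ->
  (forall j, (j < m)%nat -> pnorm n p (col X j) <= pnorm n p (col Y j)) ->
  pnorm n p (col X j0) < pnorm n p (col Y j0) ->
  colnorm n m p q X < colnorm n m p q Y.
Proof.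
  intros Hq Hj0 Hle Hlt; apply rpow_lt; [apply Rinv_0_lt_compat, Hq|].
  split; [apply Rsum_ge0; intros; apply rpow_ge0|].
  apply Rsum_lt with j0; [exact Hj0 | | apply rpow_lt; [exact Hq | split; [apply pnorm_ge0 | exact Hlt]]].
  intros j Hj; apply rpow_le; [exact Hq | split; [apply pnorm_ge0 | auto]].
Qed.

Theorem theorem6 (m n : nat) (A : nat -> nat -> Cplx) (p0 : R) (X : nat -> nat -> Cplx) :
  (m < n)%nat ->
  full_row_rank m n A ->
  0 < p0 <= 1 ->
  in_G m n A X ->
  (exists k, is_kp m n p0 A k /\ forall j, (j < m)%nat -> (nnz n (col X j) <= k)%nat) ->
  forall q p : R, 0 < q -> 0 <= p <= p0 ->
    forall Y : nat -> nat -> Cplx, in_ginv_col m n p q A Y <-> mat_eq n m Y X.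
Proof.
  (* [m < n] and full rank only ensure that G(A) is nonempty, which [X] already witnesses. *)
  intros _ _ Hp0 HX [k [[Hkp _] Hsparse]] q p Hq Hp Y.
  assert (Hcol_lt : forall Z j, in_G m n A Z -> (j < m)%nat -> ~ vec_eq n (col Z j) (col X j) ->
                    pnorm n p (col X j) < pnorm n p (col Z j)).
  { intros Z j HZ Hj Hne.
    apply (sparse_pnorm_lt m n p0 p A k); auto using in_G_col_feasible. }
  assert (Hcol_le : forall Z j, in_G m n A Z -> (j < m)%nat ->
                    pnorm n p (col X j) <= pnorm n p (col Z j)).
  { intros Z j HZ Hj; destruct (classic (vec_eq n (col Z j) (col X j))) as [E | Hne].
    - rewrite (pnorm_ext n p _ _ E); lra.
    - left; apply Hcol_lt; assumption. }
  split.
  - intros [HY Hmin] i j Hi Hj; apply NNPP; intros Hne.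
    assert (colnorm n m p q X < colnorm n m p q Y).
    { apply colnorm_lt with j; auto.
      apply Hcol_lt; [exact HY | exact Hj | intros E; apply Hne, E, Hi]. }
    specialize (Hmin X HX); lra.
  - intros HYX; split; [exact (in_G_ext m n A X Y HYX HX)|].
    intros Z HZ; rewrite (colnorm_ext n m p q X Y HYX); apply colnorm_le; auto.
Qed.
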